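(* For every $\alpha\in(0,\pi/2)$, the competitive ratio of the Straight-Up algorithm is $$\rho(\textsc{Straight-Up};\alpha)=\begin{cases}2\cos\alpha & \text{if } \alpha\le \pi/4,\\ 1/\sin\alpha & \text{otherwise.}\end{cases}$$
   Context: Online drone coverage on a line. A drone has a fixed half angle-of-view $\alpha\in(0,\pi/2)$. A drone at a point $T=(t_x,t_y)$ with $t_y\ge 0$ covers the segment $[t_x-t_y\tan\alpha,\ t_x+t_y\tan\alpha]$ of the $x$-axis. For a point $X=(x,0)$ its feasibility cone is $\mathrm{FC}(X)=\{(u,v): v\ge 0,\ |u-x|\le v\tan\alpha\}$, and the feasibility cone of a finite set of points on the $x$-axis is the intersection of their cones. An input is a sequence of points $X_0=(0,0),X_1,\dots,X_n$ ($n\ge1$) on the $x$-axis, $X_i=(x_i,0)$, revealed one at a time. A solution is a sequence of drone positions $P_0=(0,0),P_1,\dots,P_n$ with $P_i\in \mathrm{FC}(X_0,\dots,X_i)$; its cost is $\sum_{i=0}^{n-1}|P_iP_{i+1}|$ (Euclidean). An online algorithm chooses $P_i$ knowing only $X_0,\dots,X_i$. $\mathrm{OPT}(\mathbf X;\alpha)$ is the minimum cost of a solution when the whole input is known in advance. A request $X_{i+1}$ is redundant if $x_{i+1}\in[\min_{j\le i}x_j,\max_{j\le i}x_j]$. An input is good if it has no redundant requests and is scaled (and possibly reflected) so that $\min_j x_j=-1$ and $r:=\max_j x_j\in[0,1]$. The competitive ratio $\rho(\mathrm{ALG};\alpha)$ is the supremum over good inputs of $\mathrm{ALG}(\mathbf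 X;\alpha)/\mathrm{OPT}(\mathbf X;\alpha)$. The Straight-Up algorithm keeps the drone on the $y$-axis: $P_i$ is the lowest point of the $y$-axis lying in $\mathrm{FC}(X_0,\dots,X_i)$. *)

From HB Require Import structures.
From mathcomp Require Import all_boot all_order all_algebra.
From mathcomp Require Import all_classical all_reals.
From mathcomp Require Import ereal topology normedtype sequences exp trigo.
Set Implicit Arguments. Unset Strict Implicit. Unset Printing Implicit Defensive.
Import Order.TTheory GRing.Theory Num.Theory.
Local Open Scope ring_scope.
Local Open Scope classical_set_scope.

Section Drone.
Variable R : realType.

(* An input of length n is encoded by x : nat -> R, with X_i = (x i, 0)
   for i <= n (values beyond n are irrelevant), and x 0 = 0. *)

Definition in_FC1 (tana : R) (x0 : R) (p : R * R) : Prop :=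
  0 <= p.2 /\ `|p.1 - x0| <= p.2 * tana.

Definition in_FC (alpha : R) (x : nat -> R) (i : nat) (p : R * R) : Prop :=
  forall j, (j <= i)%N -> in_FC1 (tan alpha) (x j) p.

Definition dist2 (p q : R * R) : R :=
  Num.sqrt ((p.1 - q.1) ^+ 2 + (p.2 - q.2) ^+ 2).

Definition cost (n : nat) (P : nat -> R * R) : R :=
  \sum_(i < n) dist2 (P i) (P i.+1).

Definition is_solution (alpha : R) (n : nat) (x : nat -> R)
    (P : nat -> R * R) : Prop :=
  P 0%N = (0, 0) /\ forall i, (i <= n)%N -> in_FC alpha x i (P i).

Definition OPT (alpha : R) (n : nat) (x : nat -> R) : R :=
  inf [set c | exists P, is_solution alpha n x P /\ c = cost n P].

Definition straight_up (alpha : R) (x : nat -> R) (i : nat) : R * R :=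
  (0, inf [set v | in_FC alpha x i (0, v)]).

Definition ALG_SU (alpha : R) (n : nat) (x : nat -> R) : R :=
  cost n (straight_up alpha x).

Definition pmin (x : nat -> R) (i : nat) : R :=
  \big[Num.min/x 0%N]_(j < i.+1) x j.
Definition pmax (x : nat -> R) (i : nat) : R :=
  \big[Num.max/x 0%N]_(j < i.+1) x j.

Definition redundant (x : nat -> R) (i : nat) : Prop :=
  pmin x i <= x i.+1 <= pmax x i.

Definition good_input (n : nat) (x : nat -> R) : Prop :=
  (1 <= n)%N /\ x 0%N = 0 /\
  (forall i, (i < n)%N -> ~ redundant x i) /\
  pmin x n = -1 /\ 0 <= pmax x n <= 1.

Definition rho_SU (alpha : R) : \bar R :=
  ereal_sup [set (ALG_SU alpha nx.1 nx.2 / OPT alpha nx.1 nx.2)%:E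
            | nx in [set nx : nat * (nat -> R) | good_input nx.1 nx.2]].

End Drone.

From HB Require Import structures.
From mathcomp Require Import all_boot all_order all_algebra.
From mathcomp Require Import all_classical all_reals.
From mathcomp Require Import ereal topology normedtype sequences exp trigo.
From mathcomp Require Import ring lra.

(* On a good input the farthest request is at distance 1, so Straight-Up
   climbs monotonically to height 1/tan(alpha) and always pays cot(alpha).
   Any solution ends in FC(0) /\ FC(-1), so it costs at least the distance
   from the origin to this cone, bounded below by projecting the path on the
   unit normal of the nearest face: the apex at distance 1/(2 sin alpha) when
   alpha <= pi/4, the right edge of FC(-1) at distance cos alpha otherwise.
   The two-request input 0, -1 attains this bound. *)

Set Implicit Arguments.
Unset Strict Implicit.
Unset Printing Implicit Defensive.
Import Order.TTheory GRing.Theory Num.Theory.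
Local Open Scope ring_scope.
Local Open Scope classical_set_scope.

Section PrefixExtrema.
Variable R : realType.
Implicit Types (x : nat -> R) (i j : nat).

Lemma pmin_le x i j : (j <= i)%N -> pmin x i <= x j.
Proof. by move=> ji; exact: (@bigmin_le _ _ _ _ (Ordinal (ji : (j < i.+1)%N))). Qed.

Lemma le_pmax x i j : (j <= i)%N -> x j <= pmax x i.
Proof. by move=> ji; exact: (@le_bigmax _ _ _ _ _ (Ordinal (ji : (j < i.+1)%N))). Qed.

Lemma pmin_ge x i m : (forall j, (j <= i)%N -> m <= x j) -> m <= pmin x i.
Proof. by move=> mx; apply/bigmin_geP; split=> [|k _]; apply: mx; rewrite // -ltnS. Qed.

Lemma pmax_le x i m : (forall j, (j <= i)%N -> x j <= m) -> pmax x i <= m.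
Proof. by move=> xm; apply/bigmax_leP; split=> [|k _]; apply: xm; rewrite // -ltnS. Qed.

Lemma pmin_attained x i : exists2 j, (j <= i)%N & x j = pmin x i.
Proof.
have [j _ jmin] := @arg_minP _ _ 'I_i.+1 ord0 xpredT (fun k : 'I_i.+1 => x k) erefl.
have ji : (j <= i)%N by rewrite -ltnS.
exists (nat_of_ord j) => //; apply: le_anti; rewrite pmin_le // andbT.
by apply: pmin_ge => k; rewrite -ltnS => ki; exact: (jmin (Ordinal ki)).
Qed.

Definition pmaxabs x i : R := \big[Num.max/0]_(k < i.+1) `|x k|.

Lemma pmaxabs_ge0 x i : 0 <= pmaxabs x i.
Proof. exact: le_trans (normr_ge0 (x 0%N)) (@le_bigmax _ _ _ _ _ ord0). Qed.

Lemma le_pmaxabs x i j : (j <= i)%N -> `|x j| <= pmaxabs x i.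
Proof. by move=> ji; exact: (@le_bigmax _ _ _ _ _ (Ordinal (ji : (j < i.+1)%N))). Qed.

Lemma pmaxabs_le x i m :
  0 <= m -> (forall j, (j <= i)%N -> `|x j| <= m) -> pmaxabs x i <= m.
Proof.
by move=> m0 xm; apply/bigmax_leP; split=> // k _; apply: xm; rewrite -ltnS.
Qed.

Lemma pmaxabs0 x : pmaxabs x 0%N = `|x 0%N|.
Proof.
apply: le_anti; rewrite le_pmaxabs // andbT.
by apply: pmaxabs_le => // j; rewrite leqn0 => /eqP ->.
Qed.

Lemma pmaxabsS x i : pmaxabs x i <= pmaxabs x i.+1.
Proof. by apply: pmaxabs_le (pmaxabs_ge0 _ _) _ => j ji; apply/le_pmaxabs/leqW. Qed.

Lemma pmaxabs_good n x : good_input n x -> pmaxabs x n = 1.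
Proof.
case=> _ [_ [_ [xmin /andP[_ xmax]]]].
apply: le_anti; apply/andP; split.
  apply: pmaxabs_le => // j jn; rewrite ler_norml.
  by rewrite -xmin pmin_le // (le_trans (le_pmax x jn)).
have [k kn xk] := pmin_attained x n.
by rewrite -[1]normr1 -normrN -xmin -xk le_pmaxabs.
Qed.

End PrefixExtrema.

Lemma sqrtr_eq_sqr (R : rcfType) (x y : R) : 0 <= y -> x = y ^+ 2 -> Num.sqrt x = y.
Proof. by move=> y0 ->; rewrite sqrtr_sqr ger0_norm. Qed.

Lemma dist2_vertical (R : realType) (p q : R * R) :
  p.1 = q.1 -> dist2 p q = `|p.2 - q.2|.
Proof. by rewrite /dist2 => ->; rewrite subrr expr0n add0r sqrtr_sqr. Qed.

Section StraightUp.
Variables (R : realType) (a : R).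
Hypothesis tan_gt0 : 0 < tan a.

Lemma in_FC_yaxis x i v :
  in_FC a x i (0, v) <-> pmaxabs x i / tan a <= v.
Proof.
rewrite ler_pdivrMr //; split=> [xv | Mv j ji].
  have v0 : 0 <= v by case: (xv 0%N (leq0n i)).
  apply: pmaxabs_le => [|j /xv []]; first exact: mulr_ge0 (ltW _).
  by rewrite /= sub0r normrN.
have v0 : 0 <= v by rewrite -(pmulr_lge0 _ tan_gt0) (le_trans (pmaxabs_ge0 x i) Mv).
by split; rewrite //= sub0r normrN (le_trans (le_pmaxabs x ji)).
Qed.

Lemma straight_up_snd x i : (straight_up a x i).2 = pmaxabs x i / tan a.
Proof.
rewrite /straight_up /=.
have -> : [set v | in_FC a x i (0, v)] = `[pmaxabs x i / tan a, +oo[.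
  by apply/seteqP; split=> v; rewrite /= in_itv /= andbT => /in_FC_yaxis.
by rewrite inf_itv.
Qed.

Lemma straight_up_solution n x : x 0%N = 0 -> is_solution a n x (straight_up a x).
Proof.
move=> x0; split=> [|i _].
  have -> : straight_up a x 0 = (0, (straight_up a x 0).2) by [].
  by rewrite straight_up_snd pmaxabs0 x0 normr0 mul0r.
by apply/(in_FC_yaxis x i ((straight_up a x i).2)); rewrite straight_up_snd.
Qed.

Lemma ALG_SU_pmaxabs n x :
  ALG_SU a n x = (pmaxabs x n - `|x 0%N|) / tan a.
Proof.
rewrite -pmaxabs0 mulrBl -(telescope_sumr (fun i => pmaxabs x i / tan a)) //.
rewrite big_mkord; apply: eq_bigr => i _.
rewrite dist2_vertical // !straight_up_snd distrC ger0_norm // subr_ge0.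
by rewrite ler_pM2r ?invr_gt0 ?pmaxabsS.
Qed.

End StraightUp.

Section Projection.
Variable R : realType.

Lemma dist2_ge_proj (p q : R * R) (e1 e2 : R) : e1 ^+ 2 + e2 ^+ 2 = 1 ->
  e1 * (q.1 - p.1) + e2 * (q.2 - p.2) <= dist2 p q.
Proof.
move=> e_unit; set L := _ + _.
have [L0|L0] := leP L 0; first exact: le_trans L0 (sqrtr_ge0 _).
rewrite -(ger0_norm (ltW L0)) -sqrtr_sqr ler_sqrt ?addr_ge0 ?sqr_ge0 //.
(* Lagrange's identity *)
rewrite -subr_ge0 -[_ + _ in X in 0 <= X - _]mulr1 -e_unit.
have -> : ((p.1 - q.1) ^+ 2 + (p.2 - q.2) ^+ 2) * (e1 ^+ 2 + e2 ^+ 2) - L ^+ 2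
  = (e1 * (q.2 - p.2) - e2 * (q.1 - p.1)) ^+ 2 by rewrite /L; ring.
exact: sqr_ge0.
Qed.

Lemma cost_ge_proj n (P : nat -> R * R) (e1 e2 : R) : e1 ^+ 2 + e2 ^+ 2 = 1 ->
  e1 * (P n).1 + e2 * (P n).2 - (e1 * (P 0%N).1 + e2 * (P 0%N).2) <= cost n P.
Proof.
move=> e_unit; rewrite /cost -(telescope_sumr (fun i => e1 * (P i).1 + e2 * (P i).2)) //.
rewrite big_mkord; apply: ler_sum => i _.
have -> : e1 * (P i.+1).1 + e2 * (P i.+1).2 - (e1 * (P i).1 + e2 * (P i).2)
  = e1 * ((P i.+1).1 - (P i).1) + e2 * ((P i.+1).2 - (P i).2) by ring.
exact: dist2_ge_proj.
Qed.

End Projection.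

Section ConePair.
Variables (R : realType) (s c : R).
Hypotheses (s_gt0 : 0 < s) (c_gt0 : 0 < c) (unit_sc : c ^+ 2 + s ^+ 2 = 1).

Let in_cone x0 (q : R * R) := in_FC1 (s / c) x0 q.

Lemma cone_pair_apex_bound u v : s <= c ->
  in_cone 0 (u, v) -> in_cone (-1) (u, v) -> (2 * s)^-1 <= - s * u + c * v.
Proof.
move=> sc [_ /=]; rewrite subr0 ler_norml => /andP[uw _].
move=> [_ /=]; rewrite opprK ler_norml => /andP[_ uw1].
have : c ^+ 2 * (v * (s / c)) = s * c * v by field; rewrite gt_eqF.
move: (v * (s / c)) uw uw1 => w uw uw1 c2w.
have h1 : 0 <= (c ^+ 2 - s ^+ 2) * (w + u).
  by rewrite mulr_ge0 ?subr_ge0 ?ler_sqr ?nnegrE ?(ltW s_gt0) ?(ltW c_gt0) //; lra.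
have h2 : 0 <= w - u - 1 by lra.
rewrite -(ler_pM2l (_ : 0 < 2 * s)) ?mulfV ?gt_eqF ?mulr_gt0 // -subr_ge0.
have -> : 2 * s * (- s * u + c * v) - 1
    = (c ^+ 2 + s ^+ 2) * (w - u - 1) + (c ^+ 2 - s ^+ 2) * (w + u)
      + 2 * (s * c * v - c ^+ 2 * w) + (c ^+ 2 + s ^+ 2 - 1) by ring.
by rewrite c2w unit_sc !subrr mulr0 !addr0 mul1r addr_ge0.
Qed.

Lemma cone_edge_bound u v : in_cone (-1) (u, v) -> c <= - c * u + s * v.
Proof.
move=> [_ /=]; rewrite opprK ler_norml => /andP[_ uw1].
have -> : - c * u + s * v = c * (v * (s / c) - u - 1) + c by field; rewrite gt_eqF.
by rewrite lerDr mulr_ge0 ?(ltW c_gt0) // subr_ge0 lerBrDr addrC.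
Qed.

Lemma apex_in_cones :
  in_cone 0 (- 2^-1, c / (2 * s)) /\ in_cone (-1) (- 2^-1, c / (2 * s)).
Proof.
have apex_w : c / (2 * s) * (s / c) = 2^-1 by field; rewrite !gt_eqF.
have v0 : 0 <= c / (2 * s) by rewrite divr_ge0 ?mulr_ge0 ?ltW.
by split; split; rewrite //= apex_w ler_norml; apply/andP; split; lra.
Qed.

Lemma dist2_apex : dist2 (0, 0) (- 2^-1, c / (2 * s)) = (2 * s)^-1.
Proof.
apply: sqrtr_eq_sqr; first by rewrite invr_ge0 mulr_ge0 ?ltW.
transitivity ((c ^+ 2 + s ^+ 2) / (2 * s) ^+ 2); first by rewrite /=; field; rewrite gt_eqF.
by rewrite unit_sc mul1r exprVn.
Qed.

Lemma edge_foot_in_cones : c <= s ->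
  in_cone 0 (- c ^+ 2, s * c) /\ in_cone (-1) (- c ^+ 2, s * c).
Proof.
move=> cs; have foot_w : s * c * (s / c) = s ^+ 2 by field; rewrite gt_eqF.
have v0 : 0 <= s * c by rewrite mulr_ge0 ?ltW.
split; split; rewrite //= foot_w.
  by rewrite subr0 normrN ger0_norm ?sqr_ge0 // ler_sqr ?nnegrE ?(ltW c_gt0) ?(ltW s_gt0).
by rewrite opprK -unit_sc addKr ger0_norm ?sqr_ge0.
Qed.

Lemma dist2_edge_foot : dist2 (0, 0) (- c ^+ 2, s * c) = c.
Proof.
apply: sqrtr_eq_sqr; first exact: ltW.
transitivity (c ^+ 2 * (c ^+ 2 + s ^+ 2)); first by rewrite /=; ring.
by rewrite unit_sc mulr1.
Qed.

End ConePair.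

Section Acute.
Variables (R : realType) (a : R).
Hypotheses (a_gt0 : 0 < a) (a_lt_pihalf : a < pi / 2).

Lemma acute_sin_gt0 : 0 < sin a.
Proof. by apply: sin_gt0_pihalf; rewrite a_gt0 a_lt_pihalf. Qed.

Lemma acute_cos_gt0 : 0 < cos a.
Proof.
apply: cos_gt0_pihalf; rewrite a_lt_pihalf andbT (lt_trans _ a_gt0) //.
by rewrite oppr_lt0 divr_gt0 ?pi_gt0.
Qed.

Lemma acute_tan_gt0 : 0 < tan a.
Proof. exact: divr_gt0 acute_sin_gt0 acute_cos_gt0. Qed.

Lemma le_pi4E : (a <= pi / 4) = (sin a <= cos a).
Proof.
(* lra does not use section hypotheses, hence the local copies *)
have pi_gt0 := pi_gt0 R; have a0 := a_gt0; have a1 := a_lt_pihalf.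
have s_gt0 := acute_sin_gt0; have c_gt0 := acute_cos_gt0.
have cos2a : cos (a + a) = (cos a - sin a) * (cos a + sin a).
  by rewrite cosD; ring.
have [a_le|a_gt] := leP a (pi / 4).
  have : 0 <= cos (a + a) by apply: cos_ge0_pihalf; apply/andP; split; lra.
  by rewrite cos2a pmulr_lge0 ?addr_gt0 // subr_ge0.
have : cos (a + a) < 0.
  rewrite -(subrK (pi / 2) (a + a)) cosDpihalf oppr_lt0.
  by apply: sin_gt0_pihalf; apply/andP; split; lra.
by rewrite cos2a pmulr_llt0 ?addr_gt0 // subr_lt0 => /lt_geF ->.
Qed.

End Acute.

Definition opt_bound (R : realType) (a : R) : R :=
  if a <= pi / 4 then (2 * sin a)^-1 else cos a.

Definition step_input (R : realType) : nat -> R :=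
  fun i => if i == 1%N then -1 else 0.

Section Optimum.
Variables (R : realType) (a : R).
Hypotheses (a_gt0 : 0 < a) (a_lt_pihalf : a < pi / 2).

Let s_gt0 := acute_sin_gt0 a_gt0 a_lt_pihalf.
Let c_gt0 := acute_cos_gt0 a_gt0 a_lt_pihalf.
Let t_gt0 := acute_tan_gt0 a_gt0 a_lt_pihalf.

Lemma cost_ge_opt_bound n x (P : nat -> R * R) k :
  x 0%N = 0 -> (k <= n)%N -> x k = -1 -> is_solution a n x P ->
  opt_bound a <= cost n P.
Proof.
move=> x0 kn xk [P0 PF].
have := PF n (leqnn n) 0%N (leq0n n); have := PF n (leqnn n) k kn.
rewrite x0 xk; case Pn : (P n) => [u v] in_m1 in_0.
have proj e1 e2 : e1 ^+ 2 + e2 ^+ 2 = 1 -> e1 * u + e2 * v <= cost n P.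
  by move=> e_unit; have := cost_ge_proj n P e_unit; rewrite P0 Pn /= !mulr0 addr0 subr0.
have unit_sc := cos2Dsin2 a.
rewrite /opt_bound le_pi4E //; case: ifP => [sc | _].
  apply: le_trans (cone_pair_apex_bound s_gt0 c_gt0 unit_sc sc in_0 in_m1) _.
  by apply: proj; rewrite sqrrN addrC.
apply: le_trans (cone_edge_bound c_gt0 in_m1) _.
by apply: proj; rewrite sqrrN.
Qed.

Lemma OPT_le_cost n x (P : nat -> R * R) :
  is_solution a n x P -> OPT a n x <= cost n P.
Proof.
move=> solP; apply: ge_inf; last by exists P.
by exists 0 => _ [Q [_ ->]]; apply: sumr_ge0 => i _; exact: sqrtr_ge0.
Qed.

Lemma opt_bound_le_OPT n x : good_input n x -> opt_bound a <= OPT a n x.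
Proof.
move=> good; have [_ [x0 [_ [xmin _]]]] := good.
have [k kn xk] := pmin_attained x n; rewrite xmin in xk.
apply: lb_le_inf; first by exists (cost n (straight_up a x)), (straight_up a x);
  split=> //; exact: straight_up_solution.
by move=> _ [P [solP ->]]; exact: cost_ge_opt_bound x0 kn xk solP.
Qed.

Lemma ALG_SU_good n x : good_input n x -> ALG_SU a n x = (tan a)^-1.
Proof.
move=> good; have [_ [x0 _]] := good.
by rewrite ALG_SU_pmaxabs // pmaxabs_good // x0 normr0 subr0 mul1r.
Qed.

Lemma step_input_good : good_input 1 (step_input R).
Proof.
have x_bounds j : -1 <= step_input R j <= 0.
  by rewrite /step_input; case: ifP => _; rewrite ?lexx ?lerN10.
split=> //; split=> //; split.
  move=> i; rewrite ltnS leqn0 => /eqP -> /andP[+ _]; apply/negP; rewrite -ltNge.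
  apply: lt_le_trans (_ : -1 < 0) _; rewrite ?ltrN10 //.
  by apply: pmin_ge => j; rewrite leqn0 => /eqP ->.
split.
  apply: le_anti; apply/andP; split; first exact: (pmin_le _ (leqnn 1)).
  by apply: pmin_ge => j _; case/andP: (x_bounds j).
apply/andP; split; first exact: (le_pmax _ (leq0n 1)).
by apply: pmax_le => j _; case/andP: (x_bounds j) => _ /le_trans ->.
Qed.

Lemma OPT_step_input : OPT a 1 (step_input R) = opt_bound a.
Proof.
apply: le_anti; apply/andP; split; last exact: opt_bound_le_OPT step_input_good.
have unit_sc := cos2Dsin2 a.
have OPT_le q : in_FC1 (tan a) 0 q -> in_FC1 (tan a) (-1) q ->
    OPT a 1 (step_input R) <= dist2 (0, 0) q.
  move=> in_0 in_m1; pose P i := if i == 0%N then (0, 0) else q.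
  have -> : dist2 (0, 0) q = cost 1 P by rewrite /cost big_ord1.
  apply: OPT_le_cost; split=> // i; rewrite leq_eqVlt ltnS leqn0.
  case/orP=> /eqP -> j; last by rewrite leqn0 => /eqP ->; split; rewrite //= subrr normr0 mul0r.
  by rewrite /step_input; case: ifP.
rewrite /opt_bound le_pi4E //; case: ifP => [_ | /negbT]; last rewrite -ltNge => cs.
  have [in_0 in_m1] := apex_in_cones s_gt0 c_gt0.
  by rewrite -(dist2_apex s_gt0 unit_sc); apply: OPT_le.
have [in_0 in_m1] := edge_foot_in_cones s_gt0 c_gt0 unit_sc (ltW cs).
by rewrite -(dist2_edge_foot c_gt0 unit_sc); apply: OPT_le.
Qed.

Lemma opt_bound_gt0 : 0 < opt_bound a.
Proof. by rewrite /opt_bound; case: ifP => _ //; rewrite invr_gt0 mulr_gt0. Qed.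

Lemma rho_SU_opt_bound : rho_SU a = ((tan a)^-1 / opt_bound a)%:E.
Proof.
apply: le_anti; apply/andP; split.
  apply: ge_ereal_sup => _ [[n x] /= good <-].
  have OPT_gt0 := lt_le_trans opt_bound_gt0 (opt_bound_le_OPT good).
  rewrite lee_fin ALG_SU_good //; apply: ler_wpM2l; first by rewrite invr_ge0 ltW.
  by rewrite lef_pV2 ?posrE ?opt_bound_le_OPT ?opt_bound_gt0.
apply: ereal_sup_ubound; exists (1%N, step_input R); first exact: step_input_good.
by rewrite /= ALG_SU_good ?OPT_step_input //; exact: step_input_good.
Qed.

End Optimum.

Theorem theorem1 (R : realType) (alpha : R) :
  0 < alpha -> alpha < pi / 2 ->
  rho_SU alpha =
    (if alpha <= pi / 4 then 2 * cos alpha else (sin alpha)^-1)%:E.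
Proof.
move=> a_gt0 a_lt_pihalf; rewrite rho_SU_opt_bound // /opt_bound /tan.
have := acute_sin_gt0 a_gt0 a_lt_pihalf; have := acute_cos_gt0 a_gt0 a_lt_pihalf.
by case: ifP => _ c_gt0 s_gt0; congr (_%:E); field; rewrite !gt_eqF.
Qed.
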